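(* Let $T_{de}:l_\infty\to l_\infty$ be $T_{de}(x)=(0,x_0,x_1,\dots)$ with adjoint $T_{de}^*$. Then $$\Delta(T_{de}^* )=\mathcal B\cup\{(1-\delta)(1,\delta,\delta^2,\dots):\delta\in[0,1)\},$$ where for $\delta=0$ the sequence is $(1,0,0,\dots)$.
   Context: $l_\infty$: real bounded sequences indexed by $\mathbb N$. $ba(\mathbb N)$: norm dual of $l_\infty$, pairing $\langle x,\mu\rangle$. Adjoint: $\langle x,T^*(\mu)\rangle=\langle T(x),\mu\rangle$. $\Delta$: finitely additive probability measures on $2^{\mathbb N}$; a sequence $(p_n)$ with $p_n\ge0$, $\sum p_n=1$ is identified with the countably additive measure it defines. $\Delta(T^* )$: elements of $\Delta$ that are eigenvectors of $T^*$ (nonzero $\mu$ with $T^*\mu=\lambda\mu$, $\lambda\in\mathbb R$). $\mathcal B$: the set of Banach–Mazur limits, i.e. $\mu\in\Delta$ with $\langle x,\mu\rangle=\langle(x_1,x_2,\dots),\mu\rangle$ for all $x\in l_\infty$. *)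

From Stdlib Require Import Reals.
Open Scope R_scope.

Definition bounded (x : nat -> R) : Prop :=
  exists C : R, forall n : nat, Rabs (x n) <= C.

(* An element of ba(N) = (l_infty)^*: a bounded linear functional on l_infty.
   Functionals are given as maps (nat -> R) -> R; only their values on
   bounded sequences matter. *)
Definition is_dual (mu : (nat -> R) -> R) : Prop :=
  (forall (a b : R) (x y : nat -> R), bounded x -> bounded y ->
     mu (fun n => a * x n + b * y n) = a * mu x + b * mu y) /\
  (exists C : R, forall x : nat -> R, bounded x ->
     forall M : R, (forall n, Rabs (x n) <= M) -> Rabs (mu x) <= C * M).

Definition indic (A : nat -> bool) : nat -> R :=
  fun n => if A n then 1 else 0.

(* Delta : finitely additive probability measures on 2^N, viewed in ba(N)
   via mu(A) = <1_A, mu>: nonnegative on sets and total mass 1. *)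
Definition in_Delta (mu : (nat -> R) -> R) : Prop :=
  is_dual mu /\
  (forall A : nat -> bool, 0 <= mu (indic A)) /\
  mu (fun _ => 1) = 1.

Definition adjoint (T : (nat -> R) -> (nat -> R)) (mu : (nat -> R) -> R)
  : (nat -> R) -> R := fun x => mu (T x).

Definition eigvec_adj (T : (nat -> R) -> (nat -> R)) (mu : (nat -> R) -> R) : Prop :=
  (exists x : nat -> R, bounded x /\ mu x <> 0) /\
  exists lambda : R, forall x : nat -> R, bounded x ->
    adjoint T mu x = lambda * mu x.

Definition in_Delta_adj (T : (nat -> R) -> (nat -> R)) (mu : (nat -> R) -> R) : Prop :=
  in_Delta mu /\ eigvec_adj T mu.

Definition T_de (x : nat -> R) : nat -> R :=
  fun n => match n with O => 0 | S m => x m end.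

Definition is_BM_limit (mu : (nat -> R) -> R) : Prop :=
  in_Delta mu /\
  forall x : nat -> R, bounded x -> mu x = mu (fun n => x (S n)).

(* The countably additive measure given by the sequence (1-d)(1,d,d^2,...):
   <x,mu> = sum_n (1-d) d^n x_n  (with 0^0 = 1). *)
Definition is_geom_measure (d : R) (mu : (nat -> R) -> R) : Prop :=
  forall x : nat -> R, bounded x ->
    infinite_sum (fun n => (1 - d) * d ^ n * x n) (mu x).

(* Writing x = T_de (x_1, x_2, ...) + x_0 e_0, an eigenvector mu of T_de^* with
   eigenvalue lambda satisfies <x, mu> = c x_0 + lambda <(x_1, x_2, ...), mu>
   with c = <e_0, mu>; testing on the constant sequence 1 gives lambda = 1 - c.
   If c = 0 this is shift invariance, i.e. mu is a Banach-Mazur limit.  If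
   c > 0 then 0 <= lambda < 1, and iterating the relation N times leaves a
   remainder lambda^(N+1) <(x_(N+1), ...), mu>, which tends to 0 because mu is
   bounded; so mu is the geometric measure (1 - lambda)(1, lambda, lambda^2, ...).
   Conversely both kinds of measures are eigenvectors, with eigenvalues 1 and
   lambda respectively. *)

From Pilot Require Import Defs.
From Stdlib Require Import Reals Lra Lia FunctionalExtensionality.
Open Scope R_scope.

Definition shift (x : nat -> R) : nat -> R := fun n => x (S n).

Definition e0 : nat -> R := indic (Nat.eqb 0).

Definition adjoint_eigen (T : (nat -> R) -> nat -> R) (mu : (nat -> R) -> R)
    (lambda : R) : Prop :=
  forall x : nat -> R, Defs.bounded x -> adjoint T mu x = lambda * mu x.

Lemma bounded_shift (x : nat -> R) : Defs.bounded x -> Defs.bounded (shift x).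
Proof. intros [C HC]; exists C; intro n; apply HC. Qed.

Lemma bounded_T_de (x : nat -> R) : Defs.bounded x -> Defs.bounded (T_de x).
Proof.
  intros [C HC]; exists C; intros [|n]; simpl; [|apply HC].
  rewrite Rabs_R0; apply Rle_trans with (Rabs (x 0%nat)); [apply Rabs_pos | apply HC].
Qed.

Lemma bounded_indic (A : nat -> bool) : Defs.bounded (indic A).
Proof.
  exists 1; intro n; unfold indic; destruct (A n); rewrite ?Rabs_R1, ?Rabs_R0; lra.
Qed.

Lemma bounded_const (c : R) : Defs.bounded (fun _ => c).
Proof. exists (Rabs c); intro; apply Rle_refl. Qed.

Lemma is_dual_uniform_bound (mu : (nat -> R) -> R) (M : R) :
  is_dual mu -> exists K : R,
    forall y : nat -> R, (forall n, Rabs (y n) <= M) -> Rabs (mu y) <= K.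
Proof.
  intros [_ [C HC]]; exists (C * M); intros y Hy.
  apply (HC y (ex_intro _ M Hy) M Hy).
Qed.

Lemma is_dual_T_de_decomp (mu : (nat -> R) -> R) (x : nat -> R) :
  is_dual mu -> Defs.bounded x -> mu x = mu (T_de (shift x)) + x 0%nat * mu e0.
Proof.
  intros [Hlin _] Hx.
  replace x with (fun n => 1 * T_de (shift x) n + x 0%nat * e0 n) at 1
    by (apply functional_extensionality; intros [|n]; unfold e0, indic, shift; simpl; ring).
  rewrite Hlin by (apply bounded_T_de, bounded_shift, Hx || apply bounded_indic).
  ring.
Qed.

Section Eigenvector.

Variables (mu : (nat -> R) -> R) (lambda : R).
Hypothesis Hdual : is_dual mu.
Hypothesis Heigen : adjoint_eigen T_de mu lambda.

Lemma eigen_recursion (x : nat -> R) :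
  Defs.bounded x -> mu x = mu e0 * x 0%nat + lambda * mu (shift x).
Proof.
  intro Hx; rewrite (is_dual_T_de_decomp mu x Hdual Hx).
  rewrite <- (Heigen _ (bounded_shift x Hx)); unfold adjoint; ring.
Qed.

Lemma eigen_expansion (N : nat) (x : nat -> R) :
  Defs.bounded x ->
  mu x = sum_f_R0 (fun n => mu e0 * lambda ^ n * x n) N
         + lambda ^ S N * mu (fun k => x (S N + k)%nat).
Proof.
  revert x; induction N as [|N IH]; intros x Hx.
  - simpl; rewrite (eigen_recursion x Hx); unfold shift; ring.
  - rewrite (eigen_recursion x Hx), (IH _ (bounded_shift x Hx)).
    rewrite (decomp_sum _ (S N)) by lia; simpl pred.
    rewrite (sum_eq (fun n => mu e0 * lambda ^ S n * x (S n))
               (fun n => mu e0 * lambda ^ n * shift x n * lambda))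
      by (intros i _; unfold shift; simpl; ring).
    rewrite <- scal_sum; unfold shift; simpl; ring.
Qed.

End Eigenvector.

Lemma Delta_eigenvalue (mu : (nat -> R) -> R) (lambda : R) :
  in_Delta mu -> adjoint_eigen T_de mu lambda -> lambda = 1 - mu e0 /\ 0 <= lambda.
Proof.
  intros [Hdual [Hpos Hmass]] Heigen; split.
  - pose proof (eigen_recursion mu lambda Hdual Heigen _ (bounded_const 1)) as E.
    unfold shift in E; rewrite Hmass in E; lra.
  - rewrite <- (Rmult_1_r lambda), <- Hmass, <- (Heigen _ (bounded_const 1)); unfold adjoint.
    replace (T_de (fun _ => 1)) with (indic (fun n => negb (Nat.eqb 0 n)))
      by (apply functional_extensionality; intros [|n]; reflexivity).
    apply Hpos.
Qed.

Lemma infinite_sum_of_remainder (a r : nat -> R) (s q K : R) :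
  Rabs q < 1 -> (forall N, Rabs (r N) <= K) ->
  (forall N, s = sum_f_R0 a N + q ^ S N * r N) -> infinite_sum a s.
Proof.
  intros Hq Hr Hs eps Heps.
  assert (HK : 0 < Rabs K + 1) by (pose proof (Rabs_pos K); lra).
  destruct (pow_lt_1_zero q Hq (eps / (Rabs K + 1)))
    as [N HN]; [apply Rdiv_lt_0_compat; lra|].
  exists N; intros n Hn; unfold Rdist.
  rewrite (Hs n), Rminus_plus_distr, Rminus_diag, Rminus_0_l, Rabs_Ropp, Rabs_mult.
  assert (Hpow : Rabs (q ^ S n) * (Rabs K + 1) < eps).
  { apply Rmult_lt_reg_r with (/ (Rabs K + 1)); [apply Rinv_0_lt_compat; lra|].
    rewrite Rmult_assoc, Rinv_r by lra; rewrite Rmult_1_r; apply HN; lia. }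
  assert (Hrn : Rabs (r n) <= Rabs K) by (eapply Rle_trans; [apply Hr | apply Rle_abs]).
  pose proof (Rabs_pos (q ^ S n)); pose proof (Rabs_pos (r n)); nra.
Qed.

Lemma geom_of_eigen (mu : (nat -> R) -> R) (lambda : R) :
  is_dual mu -> adjoint_eigen T_de mu lambda -> mu e0 = 1 - lambda ->
  Rabs lambda < 1 -> is_geom_measure lambda mu.
Proof.
  intros Hdual Heigen Hc Hl x [M HM].
  destruct (is_dual_uniform_bound mu M Hdual) as [K HK].
  apply (infinite_sum_of_remainder _ (fun N => mu (fun k => x (S N + k)%nat)) _ lambda K Hl).
  - intro N; apply HK; intro; apply HM.
  - intro N; rewrite (eigen_expansion mu lambda Hdual Heigen N x (ex_intro _ M HM)), Hc.
    reflexivity.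
Qed.

Lemma BM_limit_of_eigen_1 (mu : (nat -> R) -> R) :
  in_Delta mu -> adjoint_eigen T_de mu 1 -> is_BM_limit mu.
Proof.
  intros HD Heigen; split; [exact HD|]; intros x Hx.
  destruct (Delta_eigenvalue mu 1 HD Heigen) as [Hc _].
  assert (Hz : mu e0 = 0) by lra.
  rewrite (eigen_recursion mu 1 (proj1 HD) Heigen x Hx), Hz; unfold shift; ring.
Qed.

Lemma BM_limit_eigen (mu : (nat -> R) -> R) :
  is_BM_limit mu -> adjoint_eigen T_de mu 1.
Proof.
  intros [_ Hinv] x Hx; unfold adjoint.
  rewrite (Hinv _ (bounded_T_de x Hx)), Rmult_1_l; reflexivity.
Qed.

Lemma infinite_sum_shift_scale (h g : nat -> R) (d l : R) :
  h 0%nat = 0 -> (forall n, h (S n) = d * g n) ->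
  infinite_sum g l -> infinite_sum h (d * l).
Proof.
  intros H0 HS Hg; apply (CV_shift _ 1).
  apply (Un_cv_ext (fun n => d * sum_f_R0 g n)).
  - intro n; rewrite Nat.add_1_r, (decomp_sum h) by lia; simpl pred.
    rewrite H0, Rplus_0_l, scal_sum; apply sum_eq; intros i _; rewrite HS; ring.
  - apply CV_mult; [|exact Hg].
    intros eps Heps; exists 0%nat; intros; rewrite Rdist_eq; lra.
Qed.

Lemma geom_measure_eigen (mu : (nat -> R) -> R) (d : R) :
  is_geom_measure d mu -> adjoint_eigen T_de mu d.
Proof.
  intros Hg x Hx; unfold adjoint.
  apply (uniqueness_sum (fun n => (1 - d) * d ^ n * T_de x n));
    [apply Hg, bounded_T_de, Hx|].
  apply (infinite_sum_shift_scale _ (fun n => (1 - d) * d ^ n * x n));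
    [simpl; ring | intro; simpl; ring | apply Hg, Hx].
Qed.

Lemma Delta_nonzero (mu : (nat -> R) -> R) :
  in_Delta mu -> exists x : nat -> R, Defs.bounded x /\ mu x <> 0.
Proof.
  intros [_ [_ Hmass]]; exists (fun _ => 1); split; [apply bounded_const | lra].
Qed.

Theorem mainTheorem15 :
  forall mu : (nat -> R) -> R,
    in_Delta_adj T_de mu <->
    (is_BM_limit mu \/
     exists d : R, 0 <= d < 1 /\ in_Delta mu /\ is_geom_measure d mu).
Proof.
  intro mu; split.
  - intros [HD [_ [lambda Heigen]]].
    destruct (Delta_eigenvalue mu lambda HD Heigen) as [Hl Hnonneg].
    assert (Hc : 0 <= mu e0) by apply HD.
    destruct (Req_dec (mu e0) 0) as [Hz | Hnz].
    + left; apply BM_limit_of_eigen_1; [exact HD|].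
      replace 1 with lambda by lra; exact Heigen.
    + right; exists lambda; split; [lra|]; split; [exact HD|].
      apply (geom_of_eigen mu lambda (proj1 HD) Heigen); [lra|].
      rewrite Rabs_right; lra.
  - intros [HBM | [d [_ [HD Hg]]]]; split.
    + exact (proj1 HBM).
    + split; [apply Delta_nonzero, HBM | exists 1; apply BM_limit_eigen, HBM].
    + exact HD.
    + split; [apply Delta_nonzero, HD | exists d; apply geom_measure_eigen, Hg].
Qed.
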